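(* Let a trained classification model have feature space $\Phi\subseteq\mathbb{R}^f$ and produce logits $z=Wx_\phi+b$ for a feature vector $x_\phi\in\Phi$, where $W\in\mathbb{R}^{n\times f}$, $b\in\mathbb{R}^n$, $n$ the number of classes. Let $x$ be an input whose feature vector $x_\phi$ has distance at most $\delta$ from the closest decision boundary in $\Phi$, i.e. $d^{f,\min}_\phi(x)\le\delta$. Then $$\max\mathrm{softmax}(Wx_\phi+b)\;\le\;\frac{e^{\delta\rho'(W)}}{e^{\delta\rho'(W)}+1},\qquad \rho'(W)=\max_{i\ne j,\ i,j\in\{1,\dots,n\}}\|W[j]-W[i]\|_2.$$
   Context: $W[k]$ denotes the $k$-th row of $W$. The classification of an input is the index of its largest logit. The decision boundary between classes $i$ and $j$ is the set of $y\in\Phi$ with $W[i]y+b[i]=W[j]y+b[j]\ge W[k]y+b[k]$ for all $k\notin\{i,j\}$; $d^{f,\min}_\phi(x)$ is the Euclidean distance from $x_\phi$ to the union of the decision boundaries between the class of $x$ and the other classes. $\mathrm{softmax}(z)[k]=e^{z[k]}/\sum_{l}e^{z[l]}$. *)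

From HB Require Import structures.
From mathcomp Require Import all_boot all_order all_algebra.
From mathcomp Require Import all_classical all_reals all_analysis.
Set Implicit Arguments. Unset Strict Implicit. Unset Printing Implicit Defensive.
Import Order.TTheory GRing.Theory Num.Theory.
Local Open Scope classical_set_scope.
Local Open Scope ring_scope.

Definition enormr (R : realType) (f : nat) (v : 'rV[R]_f) : R :=
  Num.sqrt (\sum_(i < f) v 0 i ^+ 2).
Definition enormc (R : realType) (f : nat) (v : 'cV[R]_f) : R :=
  Num.sqrt (\sum_(i < f) v i 0 ^+ 2).

Definition logits (R : realType) (n f : nat) (W : 'M[R]_(n, f)) (b : 'cV[R]_n)
  (y : 'cV[R]_f) : 'cV[R]_n := W *m y + b.

Definition boundary (R : realType) (n f : nat) (W : 'M[R]_(n, f)) (b : 'cV[R]_n)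
  (Phi : set 'cV[R]_f) (i j : 'I_n) : set 'cV[R]_f :=
  [set y | Phi y /\ logits W b y i 0 = logits W b y j 0 /\
     forall k : 'I_n, k != i -> k != j -> logits W b y k 0 <= logits W b y i 0].

(* d^{f,min}_phi : distance (in \bar R, +oo for an empty union) from x_phi to the
   union of the decision boundaries between class c and the other classes *)
Definition dmin (R : realType) (n f : nat) (W : 'M[R]_(n, f)) (b : 'cV[R]_n)
  (Phi : set 'cV[R]_f) (c : 'I_n) (xphi : 'cV[R]_f) : \bar R :=
  ereal_inf [set ((enormc (xphi - y))%:E) | y in
    \bigcup_(j in [set j : 'I_n | j != c]) boundary W b Phi c j].

Definition softmax (R : realType) (n : nat) (z : 'cV[R]_n) (k : 'I_n) : R :=
  expR (z k 0) / \sum_(l < n) expR (z l 0).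

Definition max_softmax (R : realType) (n : nat) (z : 'cV[R]_n) : R :=
  \big[Num.max/0]_(k < n) softmax z k.

Definition rho' (R : realType) (n f : nat) (W : 'M[R]_(n, f)) : R :=
  \big[Num.max/0]_(i < n) \big[Num.max/0]_(j < n | i != j)
     enormr (row j W - row i W).

From mathcomp Require Import all_boot all_order all_algebra.
From mathcomp Require Import all_classical all_reals all_analysis.
From mathcomp Require Import ring lra.
Set Implicit Arguments. Unset Strict Implicit. Unset Printing Implicit Defensive.
Import Order.TTheory GRing.Theory Num.Theory.
Local Open Scope classical_set_scope.
Local Open Scope ring_scope.

(* The gap z[c] - z[j] between the winning logit and another one vanishes on
   the boundary between c and j and, by Cauchy-Schwarz, is rho'(W)-Lipschitz in
   the features.  So the runner-up class trails c by at most delta * rho'(W),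
   and the two largest terms of the softmax denominator already force
   softmax[c] <= e^t / (e^t + 1) for that gap t. *)

(* Lagrange's identity: 2 (A B - C^2) is the sum of the (a i b j - a j b i)^2. *)
Lemma sqr_sum_mul_le (R : realDomainType) (I : finType) (a b : I -> R) :
  (\sum_i a i * b i) ^+ 2 <= (\sum_i a i ^+ 2) * (\sum_i b i ^+ 2).
Proof.
have AB : (\sum_i a i ^+ 2) * (\sum_i b i ^+ 2) =
    \sum_i \sum_j a i ^+ 2 * b j ^+ 2 by rewrite big_distrlr.
have BA : (\sum_i a i ^+ 2) * (\sum_i b i ^+ 2) =
    \sum_i \sum_j a j ^+ 2 * b i ^+ 2.
  by rewrite mulrC big_distrlr; apply: eq_bigr => i _; apply: eq_bigr => j _; rewrite mulrC.
have CC : (\sum_i a i * b i) ^+ 2 = \sum_i \sum_j a i * b i * (a j * b j).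
  by rewrite expr2 big_distrlr.
have lagrange : \sum_i \sum_j (a i * b j - a j * b i) ^+ 2 =
    (\sum_i a i ^+ 2) * (\sum_i b i ^+ 2) * 2 - (\sum_i a i * b i) ^+ 2 * 2.
  rewrite (eq_bigr (fun i => \sum_j a i ^+ 2 * b j ^+ 2 + \sum_j a j ^+ 2 * b i ^+ 2
                           - (\sum_j a i * b i * (a j * b j)) * 2)); last first.
    move=> i _; rewrite mulr_suml -big_split -sumrB /=.
    by apply: eq_bigr => j _; ring.
  by rewrite sumrB big_split /= -mulr_suml -AB -BA -CC; ring.
have : 0 <= \sum_i \sum_j (a i * b j - a j * b i) ^+ 2.
  by apply: sumr_ge0 => i _; apply: sumr_ge0 => j _; exact: sqr_ge0.
by rewrite lagrange subr_ge0 ler_pM2r.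
Qed.

Lemma sum_mul_le_sqrt (R : rcfType) (I : finType) (a b : I -> R) :
  \sum_i a i * b i <= Num.sqrt (\sum_i a i ^+ 2) * Num.sqrt (\sum_i b i ^+ 2).
Proof.
rewrite -sqrtrM; last by apply: sumr_ge0 => i _; exact: sqr_ge0.
apply: le_trans (ler_norm _) _.
by rewrite -sqrtr_sqr ler_sqrt ?sqr_sum_mul_le // mulr_ge0 // sumr_ge0 // => i _; exact: sqr_ge0.
Qed.

Lemma mulmx_le_enorm (R : realType) (f : nat) (u : 'rV[R]_f) (v : 'cV[R]_f) :
  (u *m v) 0 0 <= enormr u * enormc v.
Proof. by rewrite mxE; exact: sum_mul_le_sqrt. Qed.

Lemma enormc_ge0 (R : realType) (f : nat) (v : 'cV[R]_f) : 0 <= enormc v.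
Proof. exact: sqrtr_ge0. Qed.

Section Logits.
Variables (R : realType) (n f : nat) (W : 'M[R]_(n, f)) (b : 'cV[R]_n).

Lemma logit_gap_sub (x y : 'cV[R]_f) (i j : 'I_n) :
  (logits W b x i 0 - logits W b x j 0) - (logits W b y i 0 - logits W b y j 0) =
  ((row i W - row j W) *m (x - y)) 0 0.
Proof. by rewrite /logits mulmxBl -!row_mul mulmxBr !mxE; ring. Qed.

Lemma rho'_ge0 : 0 <= rho' W.
Proof. exact: bigmax_ge_id. Qed.

Lemma enormr_row_sub_le_rho' (i j : 'I_n) :
  i != j -> enormr (row j W - row i W) <= rho' W.
Proof. by move=> ij; apply: le_trans (le_bigmax _ _ i); exact: le_bigmax_cond. Qed.

Lemma boundary_gap_le (Phi : set 'cV[R]_f) (x y : 'cV[R]_f) (i j : 'I_n) :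
  i != j -> boundary W b Phi i j y ->
  logits W b x i 0 - logits W b x j 0 <= rho' W * enormc (x - y).
Proof.
move=> ij [_ [yij _]].
have -> : logits W b x i 0 - logits W b x j 0 = ((row i W - row j W) *m (x - y)) 0 0.
  by rewrite -logit_gap_sub yij subrr subr0.
apply: le_trans (mulmx_le_enorm _ _) _.
by rewrite ler_wpM2r ?enormc_ge0 // enormr_row_sub_le_rho' // eq_sym.
Qed.

End Logits.

Lemma le_mul_ereal_inf (R : realFieldType) (T : Type) (A : set T) (g : T -> R)
    (r t d : R) :
  0 <= r -> (forall y, A y -> t <= r * g y) ->
  (ereal_inf [set (g y)%:E | y in A] <= d%:E)%E -> t <= r * d.
Proof.
move=> r0 t_le hd; apply/ler_addgt0Pr => e e0.
have r1 : 0 < r + 1 by rewrite ltr_wpDl.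
have : (ereal_inf [set (g y)%:E | y in A] < (d + e / (r + 1))%:E)%E.
  by apply: le_lt_trans hd _; rewrite lte_fin ltrDl divr_gt0.
move=> /ereal_inf_lt [_ [y Ay <-]]; rewrite lte_fin => gy.
have rg : r * g y <= r * d + r * (e / (r + 1)) by rewrite -mulrDr ler_wpM2l // ltW.
have re : r * (e / (r + 1)) <= e.
  by rewrite mulrA ler_pdivrMr // mulrDr mulr1 mulrC lerDl ltW.
by apply: le_trans (t_le y Ay) _; lra.
Qed.

Lemma max_softmax_le_softmax (R : realType) (n : nat) (z : 'cV[R]_n) (c : 'I_n) :
  (forall k, z k 0 <= z c 0) -> max_softmax z <= softmax z c.
Proof.
move=> z_le; apply: bigmax_le => [|k _].
  by rewrite divr_ge0 ?expR_ge0 // sumr_ge0 // => l _; exact: expR_ge0.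
rewrite ler_wpM2r ?ler_expR //.
by rewrite invr_ge0 sumr_ge0 // => l _; exact: expR_ge0.
Qed.

(* The denominator is at least e^{z c} + e^{z j} >= e^{z c} (1 + e^{-t}). *)
Lemma softmax_le_gap (R : realType) (n : nat) (z : 'cV[R]_n) (c j : 'I_n) (t : R) :
  j != c -> z c 0 - z j 0 <= t -> softmax z c <= expR t / (expR t + 1).
Proof.
move=> jc gap.
set S := \sum_(l < n) expR (z l 0).
have S_ge : expR (z c 0) + expR (z j 0) <= S.
  rewrite /S (bigD1 c) //= (bigD1 j) //= addrA lerDl.
  by apply: sumr_ge0 => l _; exact: expR_ge0.
have ec : expR (z c 0) <= expR t * expR (z j 0) by rewrite -expRD ler_expR -lerBlDr.
have et := expR_gt0 t; have ej := expR_gt0 (z j 0).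
have S0 : 0 < S by apply: lt_le_trans S_ge; rewrite ltr_wpDl ?expR_ge0.
rewrite /softmax -/S ler_pdivrMr // mulrAC ler_pdivlMr; first nra.
by rewrite ltr_wpDl // ltW.
Qed.

Theorem theorem2 (R : realType) (n f : nat) (W : 'M[R]_(n, f)) (b : 'cV[R]_n)
  (Phi : set 'cV[R]_f) (xphi : 'cV[R]_f) (c : 'I_n) (delta : R) :
  Phi xphi ->
  (forall k : 'I_n, logits W b xphi k 0 <= logits W b xphi c 0) ->
  (dmin W b Phi c xphi <= delta%:E)%E ->
  max_softmax (logits W b xphi) <=
    expR (delta * rho' W) / (expR (delta * rho' W) + 1).
Proof.
move=> _ c_max hd; set z := logits W b xphi.
have [_ [_ [j0 /= j0c _] _] _] := ereal_inf_lt (le_lt_trans hd (ltry _)).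
have [jm jmc jm_max] : exists2 jm, jm != c & forall j, j != c -> z j 0 <= z jm 0.
  by case: (@arg_maxP _ _ _ j0 (fun j => j != c) (fun j => z j 0) j0c) => jm; exists jm.
apply: le_trans (max_softmax_le_softmax c_max) _.
apply: (softmax_le_gap jmc); rewrite mulrC.
apply: (le_mul_ereal_inf (rho'_ge0 W) _ hd) => y [j jc c_j_y].
apply: le_trans (boundary_gap_le _ _ c_j_y); last by rewrite eq_sym.
by rewrite lerB // jm_max.
Qed.
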